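(* Let $k=4l+3$ for a nonnegative integer $l$, and let $G$ be a $k$-uniform tight cycle (an $s$-cycle with $s=k-1$) with $n$ vertices. Then the maximum degree of $G$ is $\Delta=k$. If $n$ is even, then $\lambda(\mathcal{L})\ge\Delta+1=k+1$.
   Context: A $k$-uniform $s$-cycle with $m$ edges has vertex set $\mathbb{Z}_n$, $n=m(k-s)$ (vertex $n+i$ identified with $i$), and edges $e_j=\{j(k-s)+1,\ldots,j(k-s)+k\}$, $j=0,\ldots,m-1$; it is assumed that $n\ge 2k-s$ (for $s=k-1$: $n=m\ge k+1$). The degree $d_i$ of a vertex is the number of edges containing it. A Laplacian H-eigenvalue of $G$ is a real $\lambda$ for which there exists $\mathbf{x}\in\mathbb{R}^n\setminus\{0\}$ with $\lambda x_i^{k-1}=d_ix_i^{k-1}-\sum_{e\ni i}\prod_{j\in e\setminus\{i\}}x_j$ for all $i$ (equivalently, an H-eigenvalue of the Laplacian tensor $\mathcal{L}=\mathcal{D}-\mathcal{A}$, with $\mathcal{A}$ the adjacency tensor having entries $1/(k-1)!$ on edges and $\mathcal{D}$ the diagonal degree tensor); $\lambda(\mathcal{L})$ is the largest Laplacian H-eigenvalue. *)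

From mathcomp Require Import all_boot all_order all_algebra.
From mathcomp Require Import reals.
Set Implicit Arguments. Unset Strict Implicit. Unset Printing Implicit Defensive.
Import Order.TTheory GRing.Theory Num.Theory.
Local Open Scope ring_scope.

(* k-uniform tight cycle (s = k-1) on vertex set Z_n = {0,..,n-1}:
   edge e_j = {j+1, ..., j+k} (indices mod n), j = 0..n-1. *)
Definition tc_edge (n k : nat) (j : 'I_n) : {set 'I_n} :=
  [set i : 'I_n | [exists t : 'I_k, val i == ((val j + t.+1) %% n)%N]].

Definition tc_deg (n k : nat) (i : 'I_n) : nat :=
  #|[set j : 'I_n | i \in tc_edge k j]|.

Definition tc_maxdeg (n k : nat) : nat := (\max_(i : 'I_n) tc_deg k i)%N.

Definition tc_lap_Heig (R : realType) (n k : nat) (lam : R) : Prop :=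
  exists x : 'I_n -> R, (exists i, x i != 0) /\
    forall i : 'I_n,
      lam * x i ^+ k.-1 =
        (tc_deg k i)%:R * x i ^+ k.-1
        - \sum_(j : 'I_n | i \in tc_edge k j) \prod_(v in tc_edge k j :\ i) x v.

Definition tc_lap_largest (R : realType) (n k : nat) (mu : R) : Prop :=
  tc_lap_Heig n k mu /\ forall lam, tc_lap_Heig n k lam -> lam <= mu.

From mathcomp Require Import all_boot all_order all_algebra.
From mathcomp Require Import reals zify ring.
Import Order.TTheory GRing.Theory Num.Theory.
Local Open Scope ring_scope.
Set Implicit Arguments. Unset Strict Implicit.

(* Vertex i lies exactly in the edges e_(i-t-1), t < k, so every degree is k.
   For the eigenvalue take the alternating vector x_v = (-1)^v, well defined on
   Z_n because n is even.  As k is odd, x_i^(k-1) = 1, and the product of x over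
   e_j is (-1)^(kj + C(k+1,2)) = (-1)^j since C(k+1,2) is even for k = 4l+3.
   Hence the product over e_j minus i, for j = i-t-1, is (-1)^(t+1); these sum to
   -1 over t < k, and the eigen-equation holds with lambda = k + 1. *)

Section TightCycleIncidence.
Variables n k : nat.
Implicit Types i j v : 'I_n.+1.

Lemma tc_edgeE j : tc_edge k j = [set j + inZp t.+1 | t : 'I_k].
Proof.
apply/setP => v; rewrite !inE; apply/existsP/imsetP => -[t].
- by move=> /eqP vE; exists t => //; apply: val_inj; rewrite /= modnDmr.
- by move=> _ ->; exists t; rewrite /= modnDmr.
Qed.

Lemma tc_edges_atE i : [set j | i \in tc_edge k j] = [set i - inZp t.+1 | t : 'I_k].
Proof.
apply/setP => j; rewrite inE tc_edgeE; apply/imsetP/imsetP => -[t _ ->];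
by exists t => //; rewrite ?addrK ?subrK.
Qed.

Hypothesis k_lt_n : (k < n.+1)%N.

Lemma inZpS_inj : injective (fun t : 'I_k => inZp t.+1 : 'I_n.+1).
Proof.
move=> t1 t2 /(congr1 val) /=.
have := ltn_ord t1; have := ltn_ord t2 => ? ?.
by rewrite !modn_small; [move=> /eqP; rewrite eqSS => /eqP /val_inj | lia | lia].
Qed.

Lemma tc_deg_eq i : tc_deg k i = k.
Proof.
rewrite /tc_deg tc_edges_atE card_imset ?card_ord // => t1 t2 /addrI /oppr_inj.
exact: inZpS_inj.
Qed.

Lemma tc_maxdeg_eq : tc_maxdeg n.+1 k = k.
Proof.
apply/eqP; rewrite eqn_leq; apply/andP; split.
  by apply/bigmax_leqP => i _; rewrite tc_deg_eq.
by rewrite -{1}(tc_deg_eq ord0) leq_bigmax.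
Qed.

Lemma sum_tc_edges_at (V : nmodType) (F : 'I_n.+1 -> V) i :
  \sum_(j | i \in tc_edge k j) F j = \sum_(t < k) F (i - inZp t.+1).
Proof.
rewrite (eq_bigl [in [set j | i \in tc_edge k j]]) => [|j]; last by rewrite inE.
by rewrite tc_edges_atE big_imset // => t1 t2 _ _ /addrI /oppr_inj /inZpS_inj.
Qed.

Lemma prod_tc_edge (R : comPzSemiRingType) (F : 'I_n.+1 -> R) j :
  \prod_(v in tc_edge k j) F v = \prod_(t < k) F (j + inZp t.+1).
Proof.
by rewrite tc_edgeE big_imset // => t1 t2 _ _ /addrI /inZpS_inj.
Qed.

End TightCycleIncidence.

Section AlternatingSign.
Variable R : comPzRingType.

Lemma prod_sign_succ k : \prod_(t < k) (-1 : R) ^+ t.+1 = (-1) ^+ 'C(k.+1, 2).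
Proof. by rewrite prodrXr -bin2_sum big_mkord big_ord_recl. Qed.

Lemma sum_sign_succ k : \sum_(t < k) (-1 : R) ^+ t.+1 = - (odd k)%:R.
Proof.
elim: k => [|k IHk]; first by rewrite big_ord0 oppr0.
by rewrite big_ord_recr /= IHk exprS -signr_odd; case: (odd k) => /=; ring.
Qed.

Variable n : nat.
Hypothesis n_even : ~~ odd n.+1.

Definition alt (v : 'I_n.+1) : R := (-1) ^+ v.

Lemma alt_inZp m : alt (inZp m) = (-1) ^+ m.
Proof. by rewrite /alt /= -signr_odd odd_mod ?signr_odd // (negbTE n_even). Qed.

Lemma alt_add a b : alt (a + b) = alt a * alt b.
Proof. by rewrite /alt -exprD -(alt_inZp (a + b)). Qed.

Lemma alt_sqr a : alt a * alt a = 1.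
Proof. by rewrite /alt -exprD -signr_odd addnn odd_double. Qed.

Lemma alt_opp a : alt (- a) = alt a.
Proof. by rewrite -[LHS]mulr1 -(alt_sqr a) mulrA -alt_add addNr /alt expr0 mul1r. Qed.

Variable k : nat.
Hypotheses (k_lt_n : (k < n.+1)%N) (k_odd : odd k) (bin2_even : ~~ odd 'C(k.+1, 2)).

Lemma prod_alt_tc_edge j : \prod_(v in tc_edge k j) alt v = alt j.
Proof.
rewrite prod_tc_edge //; under eq_bigr do rewrite alt_add alt_inZp.
rewrite big_split /= prod_sign_succ -signr_odd (negbTE bin2_even) mulr1 prodr_const card_ord.
by rewrite /alt -exprM -[LHS]signr_odd oddM k_odd andbT signr_odd.
Qed.

Lemma prod_alt_tc_edge_minus (i : 'I_n.+1) (t : 'I_k) :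
  \prod_(v in tc_edge k (i - inZp t.+1) :\ i) alt v = (-1) ^+ t.+1 :> R.
Proof.
set j := i - inZp t.+1.
have i_in_edge : i \in tc_edge k j by rewrite tc_edgeE; apply/imsetP; exists t; rewrite ?subrK.
have := prod_alt_tc_edge j; rewrite (big_setD1 i i_in_edge) /= => prod_edgeE.
rewrite -[LHS]mul1r -{1}(alt_sqr i) -mulrA prod_edgeE /j alt_add alt_opp alt_inZp.
by rewrite mulrA alt_sqr mul1r.
Qed.

End AlternatingSign.

Lemma tc_lap_Heig_alt (R : realType) n k :
  ~~ odd n.+1 -> (k < n.+1)%N -> odd k -> ~~ odd 'C(k.+1, 2) ->
  tc_lap_Heig n.+1 k (k.+1%:R : R).
Proof.
move=> n_even k_lt_n k_odd bin2_even; exists (@alt R n); split.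
  by exists ord0; rewrite /alt expr0 oner_neq0.
move=> i; have -> : alt R i ^+ k.-1 = 1.
  have k_pred_even : ~~ odd k.-1 by rewrite -oddS prednK ?odd_gt0.
  by rewrite /alt -exprM -signr_odd oddM (negPf k_pred_even) andbF.
rewrite tc_deg_eq // sum_tc_edges_at //.
under eq_bigr do rewrite prod_alt_tc_edge_minus //.
by rewrite sum_sign_succ k_odd -addn1 natrD /=; ring.
Qed.

Lemma bin2_4l4_even l : ~~ odd 'C((4 * l + 3).+1, 2).
Proof.
rewrite bin2 /= (_ : _ * _ = ((2 * l + 2) * (4 * l + 3)).*2)%N ?doubleK; last by rewrite -muln2; lia.
by rewrite oddM oddD oddM.
Qed.

Theorem proposition8p1 (R : realType) (l n : nat) :
  let k := (4 * l + 3)%N in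
  (k + 1 <= n)%N ->
  tc_maxdeg n k = k /\
  (~~ odd n ->
     (exists lam : R, tc_lap_Heig n k lam /\ (k + 1)%:R <= lam) /\
     (forall mu : R, tc_lap_largest n k mu -> (k + 1)%:R <= mu)).
Proof.
move=> k; case: n => [|n]; rewrite addn1 ?ltn0 // => k_lt_n.
split; first exact: tc_maxdeg_eq.
move=> n_even; have k_odd : odd k by rewrite /k oddD oddM.
have heig := tc_lap_Heig_alt R n_even k_lt_n k_odd (bin2_4l4_even l).
by split=> [|mu [_ mu_max]]; [exists k.+1%:R | exact: mu_max].
Qed.
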